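(* Fix $1<p<2$. For every sufficiently small $\varepsilon>0$ the following holds: if $(g,h)$ is the unique solution on $[0,\infty)$ of the system (S) described in the context with initial conditions $g(0)=-1$ and $h(0)=\varepsilon$ (i.e. at $r=1$), then $h>0$ and $g<0$ on all of $[0,\infty)$.
   Context: Mass 2 spatial Schwarzschild: $(\mathbb{R}^3\setminus B_1(0),g_s=(1+1/r)^4\delta_{ij})$, $r=|x|$. Let $u_s$ be the radial solution of $\operatorname{div}_{g_s}(|\nabla u_s|^{p-2}\nabla u_s)=0$ with $u_s=1$ at $r=1$, $u_s\to0$ as $r\to\infty$; $w_s=(1-p)\log u_s$, and $r\mapsto t=w_s(r)$ is an increasing bijection $[1,\infty)\to[0,\infty)$. $W_s(t)=\int_{\{w_s=t\}}|\nabla w_s|_{g_s}^2\,da_{g_s}$. System (S) for functions $g,h$ of $t$: $\left(\frac{dg}{dt}+h\right)W_s^2+\left(g-2(p-2)h+(p-1)(3-p)\frac{dh}{dt}\right)W_s\frac{dW_s}{dt}+\frac{(p-1)(5-p)}{4}h\left(\frac{dW_s}{dt}\right)^2=0$ and $\left(\frac{dg}{dt}+h\right)W_s^2-\frac{(p-1)(5-p)}{4}h\left(\frac{dW_s}{dt}\right)^2=0$. (This is a linear first-order system whose solutions exist on all of $[0,\infty)$ and are determined by $g(0),h(0)$.) *)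

From Stdlib Require Import Reals.
From Coquelicot Require Import Coquelicot.
Open Scope R_scope.

(* Mass-2 spatial Schwarzschild in isotropic coordinates: g_s = phi^4 delta,
   phi(r) = 1 + 1/r, on { |x| >= 1 } in R^3.  All objects below are radial
   and are written as functions of r = |x|. *)
Definition phi (r : R) : R := 1 + / r.

(* |grad f|_{g_s} for a radial function f with f'(r) = du:
   g_s^{ij} d_i f d_j f = phi^{-4} du^2, so |grad f| = |du| / phi^2. *)
Definition grad_norm (r du : R) : R := Rabs du / phi r ^ 2.

(* Radial component (w.r.t. the coordinate field x^i/r) of the vector field
   |grad u|^{p-2} grad u, grad u = phi^{-4} du (x/r); for p<2 it is extended
   by 0 where du = 0 (its continuous extension). *)
Definition p_flux (p r du : R) : R :=
  if Req_EM_T du 0 then 0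
  else Rpower (grad_norm r du) (p - 2) * (du / phi r ^ 4).

(* div_{g_s}(|grad u|^{p-2} grad u) = phi^{-6} d_i(phi^6 V^i) and for a radial
   field V = F(r) x/r one has d_i(phi^6 F x^i/r) = r^{-2} (r^2 phi^6 F)'.
   Hence the (classical) radial p-Laplace equation on r > 1 reads
   (r^2 phi(r)^6 F(r))' = 0. *)
Definition radial_p_harmonic (p : R) (u : R -> R) : Prop :=
  forall r, 1 < r ->
    ex_derive u r /\
    is_derive (fun s => s ^ 2 * phi s ^ 6 * p_flux p s (Derive u s)) r 0.

Definition w_of (p : R) (u : R -> R) (r : R) : R := (1 - p) * ln (u r).

(* Integral over the level set {w_s = w_s(r)} = coordinate sphere of radius r
   of |grad w_s|^2 da_{g_s}; the g_s-area of that sphere is 4 pi r^2 phi^4. *)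
Definition level_integral (p : R) (u : R -> R) (r : R) : R :=
  4 * PI * r ^ 2 * phi r ^ 4 * (grad_norm r (Derive (w_of p u) r)) ^ 2.

Definition system_S (p : R) (W g h : R -> R) : Prop :=
  forall t, 0 < t ->
    ex_derive g t /\ ex_derive h t /\
    (Derive g t + h t) * W t ^ 2
      + (g t - 2 * (p - 2) * h t + (p - 1) * (3 - p) * Derive h t)
          * W t * Derive W t
      + (p - 1) * (5 - p) / 4 * h t * (Derive W t) ^ 2 = 0 /\
    (Derive g t + h t) * W t ^ 2
      - (p - 1) * (5 - p) / 4 * h t * (Derive W t) ^ 2 = 0.

From Stdlib Require Import Reals Lra Ranalysis5 ClassicalEpsilon.
From Coquelicot Require Import Coquelicot.
Open Scope R_scope.

(* Conservation of the flux [r^2 phi^6 |grad u|^(p-2) u' / phi^4 = -K] gives [u'] explicitly.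
   With [lambda = w'(r) = (p-1) |u'| / u] one gets [W (w r) = 4 pi (r lambda)^2] and [dW/dt = Q W]
   with [0 < Q < 2/(p-1)]; [Q > 0] amounts to [u < S := r (r+1) |u'| / (b (r-1))],
   [b = (3-p)/(p-1)], which holds because [S - u] is decreasing and [u -> 0].
   In the variable [r], [X = -g o w] and [H = h o w] satisfy (with [k], [c] the coefficients of (S))
     [X' = lambda H (1 - c Q^2)],   [k H' = lambda (X - 2(2-p) H - 2 c Q H)],
   and [Psi = r lambda (X - k Q H / 2)] has [Psi' = r lambda^2 H B] with [B > 0].
   Near [r = 1], [X ~ 1], [H ~ eps] and [k Q / 2 < 3 - p < 2], so [Psi > 0] once [eps < 1/4].
   At a first zero of [H], [Psi] would still be positive, forcing [X > 0] and so [H' > 0]: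
   impossible, hence [H > 0] everywhere, [Psi] increases, and [X > k Q H / 2 > 0]. *)

Lemma at_right_close (f : R -> R) (x0 l eps : R) :
  filterlim f (at_right x0) (locally l) -> 0 < eps ->
  exists d, 0 < d /\ forall x, x0 < x < x0 + d -> Rabs (f x - l) < eps.
Proof.
  intros Hf Heps.
  destruct (proj1 (filterlim_locally f l) Hf (mkposreal eps Heps)) as [d Hd].
  exists d; split; [apply cond_pos|].
  intros x Hx; apply (Hd x); [|lra].
  unfold ball; simpl; unfold AbsRing_ball, abs, minus, plus, opp; simpl.
  rewrite Rabs_pos_eq; lra.
Qed.

Lemma p_infty_close (f : R -> R) (l eps : R) :
  is_lim f p_infty l -> 0 < eps -> exists N, forall x, N < x -> Rabs (f x - l) < eps.
Proof.
  intros Hf Heps.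
  apply is_lim_spec in Hf.
  destruct (Hf (mkposreal eps Heps)) as [N HN].
  exists N; exact HN.
Qed.

Lemma is_lim_p_infty_le (f : R -> R) (l c N : R) :
  is_lim f p_infty l -> (forall x, N < x -> f x <= c) -> l <= c.
Proof.
  intros Hf Hc.
  apply (is_lim_le_loc f (fun _ => c) p_infty l c); [exists N; exact Hc | exact Hf |].
  apply is_lim_const.
Qed.

Lemma is_lim_p_infty_ge (f : R -> R) (l c N : R) :
  is_lim f p_infty l -> (forall x, N < x -> c <= f x) -> c <= l.
Proof.
  intros Hf Hc.
  apply (is_lim_le_loc (fun _ => c) f p_infty c l); [exists N; exact Hc | | exact Hf].
  apply is_lim_const.
Qed.

Lemma at_right_lim_ge (f : R -> R) (x0 l c d : R) :
  filterlim f (at_right x0) (locally l) -> 0 < d ->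
  (forall x, x0 < x < x0 + d -> c <= f x) -> c <= l.
Proof.
  intros Hf Hd Hc; apply Rnot_lt_le; intros Hlt.
  destruct (at_right_close f x0 l (c - l) Hf ltac:(lra)) as [e [He Hnear]].
  assert (Hm := Rmin_glb_lt d e 0 Hd He).
  assert (Hx1 := Rmin_l d e); assert (Hx2 := Rmin_r d e).
  specialize (Hc (x0 + Rmin d e / 2) ltac:(lra)).
  specialize (Hnear (x0 + Rmin d e / 2) ltac:(lra)).
  apply Rabs_def2 in Hnear; lra.
Qed.

Lemma incr_on_right (f df : R -> R) (a : R) :
  (forall x, a < x -> is_derive f x (df x)) -> (forall x, a < x -> 0 < df x) ->
  forall x y, a < x -> x < y -> f x < f y.
Proof.
  intros Hd Hpos x y Hx Hxy.
  apply (incr_function f a p_infty df); simpl; try easy.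
  - intros z Hz _; apply Hd, Hz.
  - intros z Hz _; apply Hpos, Hz.
Qed.

Lemma decr_on_right (f df : R -> R) (a : R) :
  (forall x, a < x -> is_derive f x (df x)) -> (forall x, a < x -> df x < 0) ->
  forall x y, a < x -> x < y -> f y < f x.
Proof.
  intros Hd Hneg x y Hx Hxy.
  enough (- f x < - f y) by lra.
  apply (incr_on_right (fun x => - f x) (fun x => - df x) a); auto.
  - intros z Hz; apply (is_derive_opp f z (df z)), Hd, Hz.
  - intros z Hz; specialize (Hneg z Hz); lra.
Qed.

Lemma nondecr_on_interval (f df : R -> R) (a b : R) : a < b ->
  (forall x, a <= x <= b -> is_derive f x (df x)) -> (forall x, a < x < b -> 0 <= df x) ->
  f a <= f b.
Proof.
  intros Hab Hd Hnn.
  destruct (MVT_cor2 f df a b Hab) as [c [Hc Hcab]].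
  - intros c Hc; apply is_derive_Reals, Hd, Hc.
  - specialize (Hnn c Hcab); nra.
Qed.

Lemma const_on_right (f : R -> R) (a : R) :
  (forall x, a < x -> is_derive f x 0) -> forall x y, a < x -> a < y -> f x = f y.
Proof.
  intros Hd x y Hx Hy.
  destruct (Rtotal_order x y) as [Hxy | [-> | Hxy]]; [| reflexivity |].
  - apply eq_is_derive; [intros t Ht; apply Hd; lra | exact Hxy].
  - symmetry; apply eq_is_derive; [intros t Ht; apply Hd; lra | exact Hxy].
Qed.

Lemma Derive_eta (f : R -> R) (x l : R) : is_derive f x l -> Derive (fun y => f y) x = l.
Proof. apply is_derive_unique. Qed.

Lemma continuity_pt_pos_near (f : R -> R) (x : R) : continuity_pt f x -> 0 < f x ->
  exists d, 0 < d /\ forall y, Rabs (y - x) < d -> 0 < f y.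
Proof.
  intros Hc Hpos.
  destruct (Hc (f x) Hpos) as [d [Hd Hnear]].
  exists d; split; [exact Hd|]; intros y Hy.
  destruct (Req_dec x y) as [<- | Hxy]; [exact Hpos|].
  assert (Hfy : R_dist (f y) (f x) < f x) by (apply Hnear; repeat split; auto).
  unfold R_dist in Hfy; apply Rabs_def2 in Hfy; lra.
Qed.

Lemma is_derive_continuity_pt (f : R -> R) (x l : R) : is_derive f x l -> continuity_pt f x.
Proof.
  intros Hd; apply is_derive_Reals in Hd.
  apply derivable_continuous_pt; exists l; exact Hd.
Qed.

Lemma first_nonpositive (f : R -> R) (r0 r1 : R) : r0 < r1 ->
  (forall x, r0 <= x <= r1 -> continuity_pt f x) -> 0 < f r0 -> f r1 <= 0 ->
  exists m, r0 < m <= r1 /\ f m = 0 /\ forall y, r0 <= y < m -> 0 < f y.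
Proof.
  intros Hr Hc Hf0 Hf1.
  set (E := fun s => r0 <= s <= r1 /\ forall x, r0 <= x <= s -> 0 < f x).
  assert (HE0 : E r0) by (split; [lra | intros x Hx; replace x with r0 by lra; exact Hf0]).
  destruct (completeness E) as [m [Hub Hlub]].
  { exists r1; intros s [Hs _]; lra. }
  { exists r0; exact HE0. }
  assert (Hm0 : r0 <= m) by (apply Hub, HE0).
  assert (Hm1 : m <= r1) by (apply Hlub; intros s [Hs _]; lra).
  assert (Hleft : forall y, r0 <= y < m -> 0 < f y).
  { intros y Hy; apply Rnot_le_lt; intros Hfy.
    enough (m <= y) by lra.
    apply Hlub; intros s [Hs Hpos]; apply Rnot_lt_le; intros Hys.
    specialize (Hpos y ltac:(lra)); lra. }
  assert (Hfm_le : f m <= 0).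
  { apply Rnot_lt_le; intros Hfm.
    destruct (continuity_pt_pos_near f m (Hc m ltac:(lra)) Hfm) as [d [Hd Hnear]].
    destruct (Rle_lt_or_eq_dec m r1 Hm1) as [Hlt | ->]; [|lra].
    assert (Hs : m < Rmin (m + d / 2) r1) by (apply Rmin_glb_lt; lra).
    assert (Hs1 := Rmin_l (m + d / 2) r1); assert (Hs2 := Rmin_r (m + d / 2) r1).
    enough (Rmin (m + d / 2) r1 <= m) by lra.
    apply Hub; split; [lra|].
    intros x Hx; destruct (Rlt_or_le x m) as [Hxm | Hxm]; [apply Hleft; lra|].
    apply Hnear; rewrite Rabs_pos_eq; lra. }
  assert (Hm : r0 < m) by (destruct Hm0 as [Hm0 | <-]; lra).
  assert (Hfm_ge : 0 <= f m).
  { apply Rnot_lt_le; intros Hfm.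
    destruct (continuity_pt_pos_near (fun x => - f x) m) as [d [Hd Hnear]].
    { apply continuity_pt_opp, Hc; lra. }
    { lra. }
    assert (Hy : Rmax (m - d / 2) r0 < m) by (apply Rmax_lub_lt; lra).
    assert (Hy1 := Rmax_l (m - d / 2) r0).
    assert (Hy2 := Rmax_r (m - d / 2) r0).
    specialize (Hleft (Rmax (m - d / 2) r0) ltac:(lra)).
    enough (0 < - f (Rmax (m - d / 2) r0)) by lra.
    apply Hnear; rewrite Rabs_left; lra. }
  exists m; repeat split; auto; lra.
Qed.

Lemma root_pos_derive_not_from_above (f : R -> R) (x l a : R) :
  is_derive f x l -> 0 < l -> a < x -> f x = 0 -> ~ (forall y, a < y < x -> 0 < f y).
Proof.
  intros Hd Hl Ha Hfx Hpos.
  apply is_derive_Reals in Hd.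
  destruct (Hd (l / 2) ltac:(lra)) as [d Hdl].
  assert (He := Rmin_glb_lt (d / 2) ((x - a) / 2) 0 ltac:(generalize (cond_pos d); lra) ltac:(lra)).
  assert (He1 := Rmin_l (d / 2) ((x - a) / 2)).
  assert (He2 := Rmin_r (d / 2) ((x - a) / 2)).
  set (e := Rmin (d / 2) ((x - a) / 2)) in *.
  assert (Hne : - e <> 0) by lra.
  assert (Hed : Rabs (- e) < d) by (rewrite Rabs_Ropp, Rabs_pos_eq; generalize (cond_pos d); lra).
  specialize (Hdl (- e) Hne Hed); rewrite Hfx, Rminus_0_r in Hdl.
  specialize (Hpos (x + - e) ltac:(lra)).
  apply Rabs_def2 in Hdl.
  assert (f (x + - e) / - e < 0).
  { unfold Rdiv; assert (/ - e < 0) by (apply Rinv_lt_0_compat; lra); nra. }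
  lra.
Qed.

Lemma positivity_persists (f : R -> R) (a r0 : R) : a < r0 ->
  (forall x, a < x -> continuity_pt f x) -> 0 < f r0 ->
  (forall m, r0 < m -> f m = 0 -> (forall y, r0 <= y < m -> 0 < f y) ->
     exists l, 0 < l /\ is_derive f m l) ->
  forall r, r0 <= r -> 0 < f r.
Proof.
  intros Ha Hc Hf0 Hzero r [Hr | <-]; [|exact Hf0].
  apply Rnot_le_lt; intros Hfr.
  destruct (first_nonpositive f r0 r Hr) as [m [Hm [Hfm Hpos]]]; auto.
  { intros x Hx; apply Hc; lra. }
  destruct (Hzero m ltac:(lra) Hfm Hpos) as [l [Hl Hd]].
  apply (root_pos_derive_not_from_above f m l r0 Hd Hl ltac:(lra) Hfm).
  intros y Hy; apply Hpos; lra.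
Qed.

Lemma increasing_inverse (f : R -> R) (lb ub : R) : lb < ub ->
  (forall x y, lb <= x -> x < y -> y <= ub -> f x < f y) ->
  (forall x, lb <= x <= ub -> continuity_pt f x) ->
  exists psi : R -> R,
    (forall t, f lb <= t <= f ub -> lb <= psi t <= ub /\ f (psi t) = t) /\
    (forall x, lb <= x <= ub -> psi (f x) = x).
Proof.
  intros Hlu Hinc Hc.
  assert (Hex : forall t, f lb <= t <= f ub -> exists x, lb <= x <= ub /\ f x = t).
  { intros t [[Ht1 | Ht1] [Ht2 | Ht2]]; [| exists ub | exists lb | exists lb]; try lra.
    destruct (IVT_interv (fun x => f x - t) lb ub) as [x [Hx Hfx]]; try lra.
    - intros x Hx; apply continuity_pt_minus; [apply Hc, Hx | apply continuity_pt_const].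
      intros y z; reflexivity.
    - exists x; split; [exact Hx | lra]. }
  set (psi := fun t => epsilon (inhabits 0) (fun x => lb <= x <= ub /\ f x = t)).
  assert (Hpsi : forall t, f lb <= t <= f ub -> lb <= psi t <= ub /\ f (psi t) = t).
  { intros t Ht; apply (epsilon_spec (inhabits 0) (fun x => lb <= x <= ub /\ f x = t)), Hex, Ht. }
  exists psi; split; [exact Hpsi|]; intros x Hx.
  assert (Hfx : f lb <= f x <= f ub).
  { split; [destruct (Req_dec lb x) as [<- | Hne] | destruct (Req_dec x ub) as [-> | Hne]];
      try lra; left; apply Hinc; lra. }
  destruct (Hpsi (f x) Hfx) as [Hr Heq].
  destruct (Rtotal_order (psi (f x)) x) as [Hlt | [Heq' | Hlt]]; [| exact Heq' |];
    [assert (Hl := Hinc (psi (f x)) x) | assert (Hl := Hinc x (psi (f x)))]; lra.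
Qed.

Lemma local_inverse (f df : R -> R) (a r0 : R) : a < r0 ->
  (forall r, a < r -> is_derive f r (df r)) -> (forall r, a < r -> 0 < df r) ->
  exists psi : R -> R, psi (f r0) = r0 /\ is_derive psi (f r0) (/ df r0) /\
    locally (f r0) (fun t => a < psi t /\ f (psi t) = t).
Proof.
  intros Ha Hd Hpos.
  set (lb := (a + r0) / 2); set (ub := r0 + 1).
  assert (Hab : a < lb /\ lb < r0 < ub) by (unfold lb, ub; lra).
  clearbody lb ub.
  assert (Hinc := incr_on_right f df a Hd Hpos).
  assert (Hcf : forall x, a < x -> continuity_pt f x)
    by (intros x Hx; apply (is_derive_continuity_pt f x (df x)), Hd, Hx).
  assert (Hincr : forall x y, lb <= x -> x < y -> y <= ub -> f x < f y)
    by (intros x y Hx Hxy Hy; apply Hinc; lra).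
  destruct (increasing_inverse f lb ub) as [psi [Hpsi Hinv]]; [lra | exact Hincr | |].
  { intros x Hx; apply Hcf; lra. }
  assert (Hflb : f lb < f r0) by (apply Hinc; lra).
  assert (Hfub : f r0 < f ub) by (apply Hinc; lra).
  assert (Hpsir0 : psi (f r0) = r0) by (apply Hinv; lra).
  assert (Hcont : continuity_pt psi (f r0)).
  { apply (continuity_pt_recip_interv f psi lb ub ltac:(lra) Hincr); try lra.
    - intros x Hx1 Hx2; unfold comp, id; apply Hpsi; lra.
    - intros x Hx1 Hx2; apply Hpsi; lra.
    - intros x Hx; apply Hcf; lra. }
  assert (Prf : forall x, psi (f lb) <= x <= psi (f ub) -> derivable_pt f x).
  { intros x Hx; exists (df x); apply is_derive_Reals, Hd.
    rewrite Hinv in Hx by lra; lra. }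
  assert (Hmid : psi (f lb) <= psi (f r0) <= psi (f ub)) by (rewrite !Hinv; lra).
  assert (Hdf : derive_pt f (psi (f r0)) (Prf (psi (f r0)) Hmid) = df r0).
  { apply derive_pt_eq_0; rewrite Hpsir0; apply is_derive_Reals, Hd, Ha. }
  exists psi; split; [exact Hpsir0 | split].
  - apply is_derive_Reals.
    replace (/ df r0) with (1 / derive_pt f (psi (f r0)) (Prf (psi (f r0)) Hmid))
      by (rewrite Hdf; field; generalize (Hpos r0 Ha); lra).
    apply (derivable_pt_lim_recip_interv f psi (f lb) (f ub) (f r0) Prf Hcont); try lra.
    + intros x Hx; unfold comp, id; apply Hpsi, Hx.
    + rewrite Hdf; generalize (Hpos r0 Ha); lra.
  - assert (He : 0 < Rmin (f r0 - f lb) (f ub - f r0)) by (apply Rmin_glb_lt; lra).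
    exists (mkposreal _ He); intros t Ht.
    unfold ball in Ht; simpl in Ht; unfold AbsRing_ball, abs, minus, plus, opp in Ht; simpl in Ht.
    apply Rabs_def2 in Ht.
    generalize (Rmin_l (f r0 - f lb) (f ub - f r0)) (Rmin_r (f r0 - f lb) (f ub - f r0)); intros.
    destruct (Hpsi t) as [Hr Heq]; [lra|].
    split; [lra | exact Heq].
Qed.

Lemma is_derive_of_comp_incr (f df W L : R -> R) (a r0 dL : R) : a < r0 ->
  (forall r, a < r -> is_derive f r (df r)) -> (forall r, a < r -> 0 < df r) ->
  is_derive L r0 dL -> (forall r, a < r -> W (f r) = L r) ->
  is_derive W (f r0) (dL / df r0).
Proof.
  intros Ha Hd Hpos HL HW.
  destruct (local_inverse f df a r0 Ha Hd Hpos) as [psi [Hpsir0 [Hpsi Hloc]]].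
  apply (is_derive_ext_loc (fun t => L (psi t))).
  - revert Hloc; apply filter_imp; intros t [Ht Heq].
    rewrite <- HW, Heq by exact Ht; reflexivity.
  - replace (dL / df r0) with (scal (/ df r0) dL)
      by (unfold scal; simpl; unfold mult; simpl; field; generalize (Hpos r0 Ha); lra).
    apply (is_derive_comp L psi); [rewrite Hpsir0; exact HL | exact Hpsi].
Qed.

Lemma phi_gt_1 (r : R) : 0 < r -> 1 < phi r.
Proof. intros Hr; unfold phi; assert (0 < / r) by (apply Rinv_0_lt_compat, Hr); lra. Qed.

Lemma p_flux_neg (p r du : R) : 0 < r -> du < 0 -> p_flux p r du < 0.
Proof.
  intros Hr Hdu; unfold p_flux; destruct (Req_EM_T du 0) as [E | _]; [lra|].
  assert (0 < / phi r ^ 4) by (apply Rinv_0_lt_compat, pow_lt; generalize (phi_gt_1 r Hr); lra).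
  assert (0 < Rpower (grad_norm r du) (p - 2)) by apply exp_pos.
  assert (du * / phi r ^ 4 < 0) by nra.
  unfold Rdiv; nra.
Qed.

Lemma p_flux_nonneg (p r du : R) : 0 < r -> 0 <= du -> 0 <= p_flux p r du.
Proof.
  intros Hr Hdu; unfold p_flux; destruct (Req_EM_T du 0) as [E | _]; [lra|].
  assert (0 < / phi r ^ 4) by (apply Rinv_0_lt_compat, pow_lt; generalize (phi_gt_1 r Hr); lra).
  assert (0 < Rpower (grad_norm r du) (p - 2)) by apply exp_pos.
  unfold Rdiv; apply Rmult_le_pos; [lra | apply Rmult_le_pos; lra].
Qed.

Lemma flux_of_neg_slope (p r m : R) : 0 < r -> 0 < m ->
  r ^ 2 * phi r ^ 6 * p_flux p r (- m) =
  - exp (2 * ln r + (6 - 2 * p) * ln (phi r) + (p - 1) * ln m).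
Proof.
  intros Hr Hm; assert (Hphi := phi_gt_1 r Hr).
  unfold p_flux, grad_norm; destruct (Req_EM_T (- m) 0) as [E | _]; [lra|].
  rewrite Rabs_Ropp, Rabs_pos_eq by lra.
  assert (Hpow : forall x n, 0 < x -> x ^ n = exp (INR n * ln x))
    by (intros x n Hx; rewrite <- ln_pow, exp_ln by (try apply pow_lt; lra); reflexivity).
  unfold Rpower; rewrite ln_div, ln_pow by (try apply pow_lt; lra).
  rewrite (Hpow r 2%nat), (Hpow (phi r) 6%nat), (Hpow (phi r) 4%nat) by lra.
  rewrite <- (exp_ln m) at 2 by exact Hm.
  replace (2 * ln r + (6 - 2 * p) * ln (phi r) + (p - 1) * ln m) with
    (INR 2 * ln r + INR 6 * ln (phi r) + (p - 2) * (ln m - INR 2 * ln (phi r)) + ln m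
       + - (INR 4 * ln (phi r))) by (simpl; ring).
  rewrite !exp_plus, exp_Ropp.
  field; apply Rgt_not_eq, exp_pos.
Qed.

(* [(K r^-2 phi^(2p-6))^(1/(p-1))], the value of [-u'] at which the flux [r^2 phi^6 p_flux]
   equals [-K]. *)
Definition slope (p K r : R) : R :=
  exp ((ln K - 2 * ln r - (6 - 2 * p) * ln (phi r)) / (p - 1)).

Lemma slope_pos (p K r : R) : 0 < slope p K r.
Proof. apply exp_pos. Qed.

Lemma slope_of_flux (p K r m : R) : 1 < p -> 0 < r -> 0 < m ->
  r ^ 2 * phi r ^ 6 * p_flux p r (- m) = - K -> m = slope p K r.
Proof.
  intros Hp Hr Hm Hflux.
  rewrite flux_of_neg_slope in Hflux by assumption.
  assert (HK : K = exp (2 * ln r + (6 - 2 * p) * ln (phi r) + (p - 1) * ln m)) by lra.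
  unfold slope; rewrite HK, ln_exp.
  replace ((2 * ln r + (6 - 2 * p) * ln (phi r) + (p - 1) * ln m - 2 * ln r
            - (6 - 2 * p) * ln (phi r)) / (p - 1)) with (ln m) by (field; lra).
  rewrite exp_ln; [reflexivity | exact Hm].
Qed.

Lemma flux_conserved (p : R) (u : R -> R) : radial_p_harmonic p u ->
  forall r s, 1 < r -> 1 < s ->
  r ^ 2 * phi r ^ 6 * p_flux p r (Derive u r) = s ^ 2 * phi s ^ 6 * p_flux p s (Derive u s).
Proof.
  intros Hu.
  apply (const_on_right (fun s => s ^ 2 * phi s ^ 6 * p_flux p s (Derive u s)) 1).
  intros x Hx; apply (Hu x Hx).
Qed.

Lemma not_nondecreasing_from_1_to_0 (u : R -> R) :
  filterlim u (at_right 1) (locally 1) -> is_lim u p_infty 0 ->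
  (forall r, 1 < r -> ex_derive u r) -> ~ (forall r, 1 < r -> 0 <= Derive u r).
Proof.
  intros Hu1 Hu0 Hex Hnn.
  destruct (at_right_close u 1 1 (1 / 2) Hu1 ltac:(lra)) as [d [Hd Hnear]].
  set (r := 1 + d / 2).
  assert (Hr : 1 < r < 1 + d) by (unfold r; lra).
  enough (1 / 2 <= 0) by lra.
  apply (is_lim_p_infty_ge u 0 (1 / 2) r Hu0); intros x Hx.
  assert (Hux : u r <= u x).
  { apply (nondecr_on_interval u (Derive u) r x Hx).
    - intros y Hy; apply Derive_correct, Hex; lra.
    - intros y Hy; apply Hnn; lra. }
  specialize (Hnear r Hr); apply Rabs_def2 in Hnear; lra.
Qed.

Lemma radial_p_harmonic_slope (p : R) (u : R -> R) : 1 < p ->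
  radial_p_harmonic p u -> filterlim u (at_right 1) (locally 1) -> is_lim u p_infty 0 ->
  exists K, forall r, 1 < r -> is_derive u r (- slope p K r).
Proof.
  intros Hp Hu Hu1 Hu0.
  set (K := - (2 ^ 2 * phi 2 ^ 6 * p_flux p 2 (Derive u 2))).
  assert (Hflux : forall r, 1 < r -> r ^ 2 * phi r ^ 6 * p_flux p r (Derive u r) = - K)
    by (intros r Hr; unfold K; rewrite Ropp_involutive; apply (flux_conserved p u Hu); lra).
  assert (Hweight : forall r, 1 < r -> 0 < r ^ 2 * phi r ^ 6).
  { intros r Hr; assert (Hphi := phi_gt_1 r ltac:(lra)).
    apply Rmult_lt_0_compat; apply pow_lt; lra. }
  assert (Hex : forall r, 1 < r -> ex_derive u r) by (intros r Hr; apply (Hu r Hr)).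
  assert (HK : 0 < K).
  { apply Rnot_le_lt; intros HK.
    apply (not_nondecreasing_from_1_to_0 u Hu1 Hu0 Hex); intros r Hr.
    apply Rnot_lt_le; intros Hneg.
    assert (Hf := p_flux_neg p r _ ltac:(lra) Hneg).
    generalize (Hflux r Hr) (Hweight r Hr); nra. }
  exists K; intros r Hr.
  assert (Hneg : Derive u r < 0).
  { apply Rnot_le_lt; intros Hnn.
    assert (Hf := p_flux_nonneg p r _ ltac:(lra) Hnn).
    generalize (Hflux r Hr) (Hweight r Hr); nra. }
  replace (- slope p K r) with (Derive u r); [apply Derive_correct, Hex, Hr|].
  rewrite <- (slope_of_flux p K r (- Derive u r)); try lra.
  rewrite Ropp_involutive; apply Hflux, Hr.
Qed.

Definition slope_logderiv (p r : R) : R := - (2 * (r - 1) / (p - 1) + 2) / (r * (r + 1)).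

Lemma slope_is_derive (p K r : R) : 1 < p -> 0 < r ->
  is_derive (slope p K) r (slope p K r * slope_logderiv p r).
Proof.
  intros Hp Hr; unfold slope, phi, slope_logderiv.
  assert (0 < / r) by (apply Rinv_0_lt_compat, Hr).
  auto_derive; [repeat split; lra | set (E := exp _); field; repeat split; lra].
Qed.

Definition bcoef (p : R) : R := (3 - p) / (p - 1).

Lemma bcoef_pos (p : R) : 1 < p < 2 -> 0 < bcoef p.
Proof. intros Hp; unfold bcoef; apply Rdiv_lt_0_compat; lra. Qed.

Definition kcoef (p : R) : R := (p - 1) * (3 - p).
Definition ccoef (p : R) : R := (p - 1) * (5 - p) / 4.

Lemma system_S_solve (p Wt dWt Q gt ht dg dh : R) : 1 < p < 2 -> 0 < Wt -> 0 < Q -> dWt = Q * Wt ->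
  (dg + ht) * Wt ^ 2 + (gt - 2 * (p - 2) * ht + (p - 1) * (3 - p) * dh) * Wt * dWt
    + (p - 1) * (5 - p) / 4 * ht * dWt ^ 2 = 0 ->
  (dg + ht) * Wt ^ 2 - (p - 1) * (5 - p) / 4 * ht * dWt ^ 2 = 0 ->
  dg = - ht + ccoef p * ht * Q ^ 2 /\
  kcoef p * dh = - gt + 2 * (p - 2) * ht - 2 * ccoef p * ht * Q.
Proof.
  intros Hp HW HQ -> E1 E2.
  assert (HW2 : 0 < Wt ^ 2) by (apply pow_lt, HW).
  assert (Hdg : (dg + ht - ccoef p * ht * Q ^ 2) * Wt ^ 2 = 0) by (unfold ccoef; lra).
  assert (Hdh : (gt - 2 * (p - 2) * ht + kcoef p * dh + 2 * ccoef p * ht * Q) * (Q * Wt ^ 2) = 0)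
    by (unfold ccoef, kcoef in *; lra).
  apply Rmult_integral in Hdg; apply Rmult_integral in Hdh.
  assert (0 < Q * Wt ^ 2) by (apply Rmult_lt_0_compat; assumption).
  destruct Hdg, Hdh; split; lra.
Qed.

Section Profile.

Variables (p K : R) (u : R -> R).
Hypothesis Hp : 1 < p < 2.
Hypothesis u_at_1 : filterlim u (at_right 1) (locally 1).
Hypothesis u_at_infty : is_lim u p_infty 0.
Hypothesis u_deriv : forall r, 1 < r -> is_derive u r (- slope p K r).

Lemma u_decreasing : forall r s, 1 < r -> r < s -> u s < u r.
Proof.
  apply (decr_on_right u (fun r => - slope p K r) 1 u_deriv).
  intros r _; generalize (slope_pos p K r); lra.
Qed.

Lemma u_pos : forall r, 1 < r -> 0 < u r.
Proof.
  intros r Hr.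
  assert (Hnn : 0 <= u (r + 1)).
  { apply (is_lim_p_infty_le u 0 (u (r + 1)) (r + 1) u_at_infty).
    intros x Hx; left; apply u_decreasing; lra. }
  generalize (u_decreasing r (r + 1) Hr ltac:(lra)); lra.
Qed.

Lemma u_lt_1 : forall r, 1 < r -> u r < 1.
Proof.
  intros r Hr.
  assert (Hmid : u ((1 + r) / 2) <= 1).
  { apply (at_right_lim_ge u 1 1 _ ((r - 1) / 2) u_at_1); [lra|].
    intros x Hx; left; apply u_decreasing; lra. }
  generalize (u_decreasing ((1 + r) / 2) r ltac:(lra) ltac:(lra)); lra.
Qed.

Lemma u_lt_slope_bound : forall r, 1 < r ->
  u r < slope p K r * r * (r + 1) / (bcoef p * (r - 1)).
Proof.
  assert (Hb := bcoef_pos p Hp).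
  set (S := fun s => slope p K s * s * (s + 1) / (bcoef p * (s - 1))).
  assert (HS : forall s, 1 < s -> 0 <= S s).
  { intros s Hs; assert (Hsl := slope_pos p K s); unfold S.
    apply Rlt_le, Rdiv_lt_0_compat;
      [apply Rmult_lt_0_compat; [apply Rmult_lt_0_compat|] | apply Rmult_lt_0_compat]; lra. }
  assert (HD : forall s, 1 < s ->
    is_derive (fun s => S s - u s) s (- (2 * slope p K s * s / (bcoef p * (s - 1) ^ 2)))).
  { intros s Hs; unfold S.
    assert (H1 := slope_is_derive p K s ltac:(lra) ltac:(lra)).
    assert (H2 := u_deriv s Hs).
    auto_derive.
    - repeat split; try (eexists; eauto). apply Rmult_integral_contrapositive; split; lra.
    - rewrite (Derive_eta (slope p K) _ _ H1), (Derive_eta u _ _ H2).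
      unfold slope_logderiv, bcoef; field; repeat split; lra. }
  assert (Hdecr : forall x y, 1 < x -> x < y -> S y - u y < S x - u x).
  { apply (decr_on_right _ _ 1 HD); intros s Hs.
    assert (Hsl := slope_pos p K s).
    assert (0 < 2 * slope p K s * s / (bcoef p * (s - 1) ^ 2)); [|lra].
    apply Rdiv_lt_0_compat; [nra | apply Rmult_lt_0_compat; [lra | apply pow_lt; lra]]. }
  intros r Hr; fold (S r); apply Rnot_le_lt; intros Hle.
  assert (Hgap : S (r + 1) - u (r + 1) < 0) by (generalize (Hdecr r (r + 1) Hr ltac:(lra)); lra).
  enough (u (r + 1) - S (r + 1) <= 0) by lra.
  apply (is_lim_p_infty_ge u 0 _ (r + 1) u_at_infty); intros x Hx.
  generalize (Hdecr (r + 1) x ltac:(lra) Hx) (HS x ltac:(lra)); lra.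
Qed.

Definition w_slope (r : R) : R := (p - 1) * slope p K r / u r.

Lemma w_slope_pos : forall r, 1 < r -> 0 < w_slope r.
Proof.
  intros r Hr; unfold w_slope.
  apply Rdiv_lt_0_compat; [apply Rmult_lt_0_compat; [lra | apply slope_pos] | apply u_pos, Hr].
Qed.

Lemma w_is_derive : forall r, 1 < r -> is_derive (w_of p u) r (w_slope r).
Proof.
  intros r Hr; assert (Hu := u_pos r Hr); assert (Hd := u_deriv r Hr).
  unfold w_of, w_slope; auto_derive.
  - split; [eexists; eauto | lra].
  - rewrite (Derive_eta u _ _ Hd).
    field; lra.
Qed.

Lemma w_pos : forall r, 1 < r -> 0 < w_of p u r.
Proof.
  intros r Hr; unfold w_of.
  assert (ln (u r) < 0)
    by (rewrite <- ln_1; apply ln_increasing; [apply u_pos | apply u_lt_1]; lra).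
  nra.
Qed.

Lemma w_near_1 : forall eps, 0 < eps ->
  exists d, 0 < d /\ forall r, 1 < r < 1 + d -> w_of p u r < eps.
Proof.
  intros eps Heps.
  set (e := exp (- (eps / (p - 1)))).
  assert (He1 : e < 1).
  { unfold e; rewrite <- exp_0 at 2; apply exp_increasing.
    assert (0 < eps / (p - 1)) by (apply Rdiv_lt_0_compat; lra); lra. }
  assert (He0 : 0 < e) by apply exp_pos.
  destruct (at_right_close u 1 1 (1 - e) u_at_1 ltac:(lra)) as [d [Hd Hnear]].
  exists d; split; [exact Hd|]; intros r Hr.
  specialize (Hnear r Hr); apply Rabs_def2 in Hnear.
  assert (Hln : ln e < ln (u r)) by (apply ln_increasing; lra).
  unfold e in Hln; rewrite ln_exp in Hln; unfold w_of.
  apply (Rmult_lt_compat_l (p - 1)) in Hln; [|lra].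
  replace ((p - 1) * - (eps / (p - 1))) with (- eps) in Hln by (field; lra); lra.
Qed.

Lemma w_large : forall T, exists N, forall r, N < r -> T < w_of p u r.
Proof.
  intros T.
  set (e := exp (- (T / (p - 1)))).
  assert (He0 : 0 < e) by apply exp_pos.
  destruct (p_infty_close u 0 e u_at_infty He0) as [N HN].
  exists (Rmax N 1); intros r Hr.
  assert (HrN : N < r) by (generalize (Rmax_l N 1); lra).
  assert (Hu := u_pos r ltac:(generalize (Rmax_r N 1); lra)).
  specialize (HN r HrN); rewrite Rminus_0_r, Rabs_pos_eq in HN by lra.
  assert (Hln : ln (u r) < ln e) by (apply ln_increasing; lra).
  unfold e in Hln; rewrite ln_exp in Hln; unfold w_of.
  apply (Rmult_lt_compat_l (p - 1)) in Hln; [|lra].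
  replace ((p - 1) * - (T / (p - 1))) with (- T) in Hln by (field; lra); lra.
Qed.

Lemma w_onto : forall t, 0 < t -> exists r, 1 < r /\ w_of p u r = t.
Proof.
  intros t Ht.
  destruct (w_near_1 t Ht) as [d [Hd Hnear]].
  destruct (w_large t) as [N Hlarge].
  set (r1 := 1 + d / 2); set (r2 := Rmax N r1 + 1).
  assert (Hr1 : w_of p u r1 < t) by (apply Hnear; unfold r1; lra).
  assert (Hr2 : t < w_of p u r2) by (apply Hlarge; unfold r2; generalize (Rmax_l N r1); lra).
  assert (Hr12 : 1 < r1 < r2) by (unfold r2, r1; generalize (Rmax_r N (1 + d / 2)); lra).
  destruct (IVT_interv (fun r => w_of p u r - t) r1 r2) as [r [Hr Hwr]]; try lra.
  - intros x Hx; apply continuity_pt_minus; [|apply continuity_pt_const; intros y z; reflexivity].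
    apply (is_derive_continuity_pt _ x (w_slope x)), w_is_derive; lra.
  - exists r; split; lra.
Qed.

Definition W_logderiv (r : R) : R :=
  2 / (p - 1) * (1 - bcoef p * u r * (r - 1) / (r * slope p K r * (r + 1))).

Lemma W_logderiv_bounds : forall r, 1 < r -> 0 < W_logderiv r < 2 / (p - 1).
Proof.
  intros r Hr.
  assert (Hu := u_pos r Hr); assert (Hup := u_lt_slope_bound r Hr).
  assert (HM := slope_pos p K r); assert (Hb := bcoef_pos p Hp).
  assert (Hden : 0 < r * slope p K r * (r + 1))
    by (apply Rmult_lt_0_compat; [apply Rmult_lt_0_compat|]; lra).
  assert (Hy0 : 0 < bcoef p * u r * (r - 1) / (r * slope p K r * (r + 1))).
  { apply Rdiv_lt_0_compat; [apply Rmult_lt_0_compat; [apply Rmult_lt_0_compat|] | ]; lra. }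
  assert (Hy1 : bcoef p * u r * (r - 1) / (r * slope p K r * (r + 1)) < 1).
  { apply (Rmult_lt_reg_r (r * slope p K r * (r + 1))); [exact Hden|].
    replace (bcoef p * u r * (r - 1) / (r * slope p K r * (r + 1)) * (r * slope p K r * (r + 1)))
      with (bcoef p * (r - 1) * u r) by (field; lra).
    apply (Rmult_lt_compat_l (bcoef p * (r - 1))) in Hup; [|apply Rmult_lt_0_compat; lra].
    replace (bcoef p * (r - 1) * (slope p K r * r * (r + 1) / (bcoef p * (r - 1))))
      with (1 * (r * slope p K r * (r + 1))) in Hup by (field; lra).
    lra. }
  assert (0 < 2 / (p - 1)) by (apply Rdiv_lt_0_compat; lra).
  unfold W_logderiv; split; nra.
Qed.

(* Equivalent to [dW/dt = Q W], since [W (w r) = 4 pi (r w')^2] and [d/dr = w' d/dt]. *)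
Lemma r_w_slope_is_derive : forall r, 1 < r ->
  is_derive (fun s => s * w_slope s) r (r * w_slope r * (w_slope r * W_logderiv r / 2)).
Proof.
  intros r Hr.
  assert (Hu := u_pos r Hr); assert (HM := slope_pos p K r).
  assert (H1 := slope_is_derive p K r ltac:(lra) ltac:(lra)); assert (H2 := u_deriv r Hr).
  unfold w_slope; auto_derive.
  - repeat split; try (eexists; eauto); lra.
  - rewrite (Derive_eta (slope p K) _ _ H1), (Derive_eta u _ _ H2).
    unfold W_logderiv, slope_logderiv, bcoef; field; repeat split; lra.
Qed.

Lemma level_integral_w_slope : forall r, 1 < r ->
  level_integral p u r = 4 * PI * (r * w_slope r) ^ 2.
Proof.
  intros r Hr; unfold level_integral, grad_norm.
  rewrite (is_derive_unique _ _ _ (w_is_derive r Hr)).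
  assert (Hl := w_slope_pos r Hr); assert (Hphi := phi_gt_1 r ltac:(lra)).
  rewrite Rabs_pos_eq by lra; field; lra.
Qed.

Lemma W_along_w (W : R -> R) :
  (forall r, 1 < r -> W (w_of p u r) = level_integral p u r) ->
  forall r, 1 < r -> 0 < W (w_of p u r) /\ Derive W (w_of p u r) = W_logderiv r * W (w_of p u r).
Proof.
  intros HW r Hr.
  set (Y := fun s => s * w_slope s).
  assert (HWY : forall s, 1 < s -> W (w_of p u s) = 4 * PI * Y s ^ 2)
    by (intros s Hs; rewrite HW, level_integral_w_slope by exact Hs; reflexivity).
  assert (HY := r_w_slope_is_derive r Hr); fold Y in HY.
  assert (Hl := w_slope_pos r Hr).
  assert (HYpos : 0 < Y r) by (unfold Y; apply Rmult_lt_0_compat; lra).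
  assert (HL : is_derive (fun s => 4 * PI * Y s ^ 2) r
                 (4 * PI * (2 * Y r * (Y r * (w_slope r * W_logderiv r / 2))))).
  { auto_derive; [eexists; exact HY|].
    replace (Derive (fun x => Y x) r) with (Y r * (w_slope r * W_logderiv r / 2))
      by (symmetry; apply is_derive_unique, HY).
    ring. }
  assert (HWd := is_derive_of_comp_incr (w_of p u) w_slope W _ 1 r _ Hr
                   w_is_derive w_slope_pos HL HWY).
  rewrite (is_derive_unique _ _ _ HWd), HWY by exact Hr.
  assert (HPI := PI_RGT_0).
  split; [apply Rmult_lt_0_compat; [lra | apply pow_lt, HYpos] | field; lra].
Qed.

Definition Psi (X H : R -> R) (r : R) : R :=
  r * w_slope r * (X r - kcoef p / 2 * W_logderiv r * H r).

Definition Psi_rate (r : R) : R :=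
  bcoef p * u r * (r - 1) / (r * slope p K r * (r + 1))
  + 2 * r * (bcoef p * u r / (r * slope p K r)) ^ 2 / (r + 1) ^ 2.

Lemma Psi_rate_pos : forall r, 1 < r -> 0 < Psi_rate r.
Proof.
  intros r Hr; unfold Psi_rate.
  assert (Hu := u_pos r Hr); assert (HM := slope_pos p K r); assert (Hb := bcoef_pos p Hp).
  assert (0 < bcoef p * u r * (r - 1) / (r * slope p K r * (r + 1))).
  { apply Rdiv_lt_0_compat; apply Rmult_lt_0_compat; try apply Rmult_lt_0_compat; lra. }
  assert (0 <= 2 * r * (bcoef p * u r / (r * slope p K r)) ^ 2 / (r + 1) ^ 2).
  { apply Rmult_le_pos; [apply Rmult_le_pos; [lra | apply pow2_ge_0]|].
    apply Rlt_le, Rinv_0_lt_compat, pow_lt; lra. }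
  lra.
Qed.

(* The weight [kQ/2] makes the [X]-terms cancel in [Psi'], because [(r w')' = r w' * w' Q / 2]. *)
Lemma Psi_is_derive (X H : R -> R) (r dH : R) : 1 < r ->
  is_derive X r (w_slope r * H r * (1 - ccoef p * W_logderiv r ^ 2)) ->
  is_derive H r dH ->
  kcoef p * dH = w_slope r * (X r - 2 * (2 - p) * H r - 2 * ccoef p * W_logderiv r * H r) ->
  is_derive (Psi X H) r (r * w_slope r ^ 2 * H r * Psi_rate r).
Proof.
  intros Hr HX HH EH.
  assert (Hu := u_pos r Hr); assert (HM := slope_pos p K r).
  assert (H1 := slope_is_derive p K r ltac:(lra) ltac:(lra)); assert (H2 := u_deriv r Hr).
  assert (EH' : dH = w_slope r * (X r - 2 * (2 - p) * H r - 2 * ccoef p * W_logderiv r * H r)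
                       / kcoef p) by (rewrite <- EH; unfold kcoef; field; lra).
  unfold Psi, w_slope, W_logderiv; auto_derive.
  - repeat split; try (eexists; eauto); try lra.
    apply Rmult_integral_contrapositive; split; [apply Rmult_integral_contrapositive; split|]; lra.
  - rewrite (Derive_eta (slope p K) _ _ H1), (Derive_eta u _ _ H2).
    rewrite (Derive_eta X _ _ HX), (Derive_eta H _ _ HH).
    rewrite EH'; unfold Psi_rate, w_slope, W_logderiv, slope_logderiv, bcoef, kcoef, ccoef.
    field; repeat split; lra.
Qed.

Section System.

Variables (W g h : R -> R).
Hypothesis W_level : forall r, 1 < r -> W (w_of p u r) = level_integral p u r.
Hypothesis gh_S : system_S p W g h.

Definition X (r : R) : R := - g (w_of p u r).
Definition H (r : R) : R := h (w_of p u r).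

Lemma system_S_along_w : forall r, 1 < r ->
  is_derive X r (w_slope r * H r * (1 - ccoef p * W_logderiv r ^ 2)) /\
  exists dH, is_derive H r dH /\
    kcoef p * dH = w_slope r * (X r - 2 * (2 - p) * H r - 2 * ccoef p * W_logderiv r * H r).
Proof.
  intros r Hr.
  destruct (gh_S (w_of p u r) (w_pos r Hr)) as [Hg [Hh [E1 E2]]].
  destruct (W_along_w W W_level r Hr) as [HW HdW].
  destruct (system_S_solve p _ _ (W_logderiv r) _ _ _ _ Hp HW
              (proj1 (W_logderiv_bounds r Hr)) HdW E1 E2) as [Hdg Hdh].
  assert (Hw := w_is_derive r Hr).
  split.
  - replace (w_slope r * H r * (1 - ccoef p * W_logderiv r ^ 2))
      with (- (w_slope r * Derive g (w_of p u r))) by (unfold H; rewrite Hdg; ring).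
    apply (is_derive_opp (fun s => g (w_of p u s))).
    apply (is_derive_comp g (w_of p u)); [apply Derive_correct, Hg | exact Hw].
  - exists (w_slope r * Derive h (w_of p u r)); split.
    + apply (is_derive_comp h (w_of p u)); [apply Derive_correct, Hh | exact Hw].
    + unfold X, H; rewrite Rmult_comm, Rmult_assoc, (Rmult_comm _ (kcoef p)), Hdh; ring.
Qed.

Lemma Psi_nondecreasing : forall a b, 1 < a -> a < b -> (forall x, a < x < b -> 0 < H x) ->
  Psi X H a <= Psi X H b.
Proof.
  intros a b Ha Hab Hpos.
  apply (nondecr_on_interval _ (fun r => r * w_slope r ^ 2 * H r * Psi_rate r) a b Hab).
  - intros r Hr; destruct (system_S_along_w r ltac:(lra)) as [HX [dH [HH EH]]].
    apply (Psi_is_derive X H r dH); auto; lra.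
  - intros r Hr.
    assert (0 < H r) by (apply Hpos, Hr).
    assert (0 < Psi_rate r) by (apply Psi_rate_pos; lra).
    assert (0 < w_slope r ^ 2) by (apply pow_lt, w_slope_pos; lra).
    apply Rlt_le, Rmult_lt_0_compat; [apply Rmult_lt_0_compat; [apply Rmult_lt_0_compat|]|]; lra.
Qed.

Lemma kQ_bounds : forall r, 1 < r -> 0 < kcoef p / 2 * W_logderiv r < 3 - p.
Proof.
  intros r Hr; destruct (W_logderiv_bounds r Hr) as [HQ0 HQ1].
  assert (Hk : 0 < kcoef p / 2)
    by (unfold kcoef; apply Rdiv_lt_0_compat; [apply Rmult_lt_0_compat|]; lra).
  split; [apply Rmult_lt_0_compat; assumption|].
  apply (Rmult_lt_compat_l (kcoef p / 2)) in HQ1; [|exact Hk].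
  replace (kcoef p / 2 * (2 / (p - 1))) with (3 - p) in HQ1 by (unfold kcoef; field; lra).
  exact HQ1.
Qed.

Variable eps : R.
Hypothesis eps_small : 0 < eps < 1 / 4.
Hypothesis g_0 : g 0 = -1.
Hypothesis h_0 : h 0 = eps.
Hypothesis g_at_0 : filterlim g (at_right 0) (locally (g 0)).
Hypothesis h_at_0 : filterlim h (at_right 0) (locally (h 0)).

Lemma Psi_pos_near_1 : exists d, 0 < d /\ forall r, 1 < r < 1 + d -> 0 < H r /\ 0 < Psi X H r.
Proof.
  destruct (at_right_close g 0 (g 0) (eps / 2) g_at_0 ltac:(lra)) as [d1 [Hd1 Hg]].
  destruct (at_right_close h 0 (h 0) (eps / 2) h_at_0 ltac:(lra)) as [d2 [Hd2 Hh]].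
  rewrite g_0 in Hg; rewrite h_0 in Hh.
  destruct (w_near_1 (Rmin d1 d2) ltac:(apply Rmin_glb_lt; lra)) as [d [Hd Hw]].
  exists d; split; [exact Hd|]; intros r Hr.
  assert (Hr1 : 1 < r) by lra.
  assert (Hwr := w_pos r Hr1); specialize (Hw r Hr).
  generalize (Rmin_l d1 d2) (Rmin_r d1 d2); intros.
  specialize (Hg (w_of p u r) ltac:(lra)); specialize (Hh (w_of p u r) ltac:(lra)).
  apply Rabs_def2 in Hg; apply Rabs_def2 in Hh.
  assert (HkQ := kQ_bounds r Hr1).
  assert (Hrl : 0 < r * w_slope r) by (apply Rmult_lt_0_compat; [lra | apply w_slope_pos, Hr1]).
  split; [unfold H; lra|].
  unfold Psi; rewrite Rmult_assoc; apply Rmult_lt_0_compat; [lra|].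
  apply Rmult_lt_0_compat; [apply w_slope_pos, Hr1|].
  unfold X, H; nra.
Qed.

Lemma H_pos : forall r, 1 < r -> 0 < H r.
Proof.
  destruct Psi_pos_near_1 as [d [Hd Hnear]].
  set (r0 := 1 + d / 2).
  assert (Hr0 : 1 < r0 < 1 + d) by (unfold r0; lra).
  assert (Hfrom_r0 : forall r, r0 <= r -> 0 < H r).
  { apply (positivity_persists H 1 r0 ltac:(lra)); [| apply Hnear, Hr0 |].
    - intros x Hx; destruct (system_S_along_w x Hx) as [_ [dH [HH _]]].
      apply (is_derive_continuity_pt H x dH HH).
    - intros m Hm HHm Hpos.
      destruct (system_S_along_w m ltac:(lra)) as [_ [dH [HH EH]]].
      assert (HPsi : 0 < Psi X H m).
      { apply Rlt_le_trans with (Psi X H r0); [apply Hnear, Hr0|].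
        apply Psi_nondecreasing; [lra | lra | intros x Hx; apply Hpos; lra]. }
      assert (Hl := w_slope_pos m ltac:(lra)).
      unfold Psi in HPsi; rewrite HHm, Rmult_0_r, Rminus_0_r in HPsi.
      rewrite HHm in EH.
      assert (HXm : 0 < X m) by (apply (Rmult_lt_reg_l (m * w_slope m)); nra).
      exists dH; split; [|exact HH].
      assert (0 < kcoef p) by (unfold kcoef; apply Rmult_lt_0_compat; lra).
      apply (Rmult_lt_reg_l (kcoef p)); nra. }
  intros r Hr; destruct (Rle_or_lt r0 r) as [Hle | Hlt]; [apply Hfrom_r0, Hle|].
  apply Hnear; lra.
Qed.

Lemma X_pos : forall r, 1 < r -> 0 < X r.
Proof.
  destruct Psi_pos_near_1 as [d [Hd Hnear]].
  intros r Hr.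
  assert (HPsi : 0 < Psi X H r).
  { destruct (Rlt_or_le r (1 + d / 2)) as [Hlt | Hle]; [apply Hnear; lra|].
    apply Rlt_le_trans with (Psi X H (1 + d / 2)); [apply Hnear; lra|].
    destruct Hle as [Hlt | <-]; [|lra].
    apply Psi_nondecreasing; [lra | exact Hlt | intros x Hx; apply H_pos; lra]. }
  assert (Hrl : 0 < r * w_slope r) by (apply Rmult_lt_0_compat; [lra | apply w_slope_pos, Hr]).
  assert (HkQ := kQ_bounds r Hr); assert (HH := H_pos r Hr).
  unfold Psi in HPsi.
  assert (0 < X r - kcoef p / 2 * W_logderiv r * H r)
    by (apply (Rmult_lt_reg_l (r * w_slope r)); nra).
  nra.
Qed.

Lemma system_S_sign : forall t, 0 <= t -> 0 < h t /\ g t < 0.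
Proof.
  intros t [Ht | <-]; [|rewrite g_0, h_0; lra].
  destruct (w_onto t Ht) as [r [Hr <-]].
  generalize (H_pos r Hr) (X_pos r Hr); unfold H, X; lra.
Qed.

End System.

End Profile.

Theorem proposition3p10 :
  forall p : R, 1 < p < 2 ->
  forall (u W : R -> R),
    (* u = u_s : radial p-harmonic, u_s(1) = 1, u_s -> 0 at infinity *)
    radial_p_harmonic p u ->
    u 1 = 1 ->
    filterlim u (at_right 1) (locally 1) ->
    is_lim u p_infty 0 ->
    (* W = W_s as a function of t = w_s(r) *)
    (forall r, 1 < r -> W (w_of p u r) = level_integral p u r) ->
    exists eps0 : R, 0 < eps0 /\
      forall eps : R, 0 < eps < eps0 ->
      forall g h : R -> R,
        system_S p W g h ->
        g 0 = -1 -> h 0 = eps ->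
        filterlim g (at_right 0) (locally (g 0)) ->
        filterlim h (at_right 0) (locally (h 0)) ->
        forall t, 0 <= t -> 0 < h t /\ g t < 0.
Proof.
  intros p Hp u W Hu _ Hu1 Hu0 HW.
  destruct (radial_p_harmonic_slope p u (proj1 Hp) Hu Hu1 Hu0) as [K Hslope].
  exists (1 / 4); split; [lra|].
  intros eps Heps g h HS Hg0 Hh0 Hgc Hhc.
  exact (system_S_sign p K u Hp Hu1 Hu0 Hslope W g h HW HS eps Heps Hg0 Hh0 Hgc Hhc).
Qed.
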